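(* Let $G$ be a finite group with exactly $4$ irrational conjugacy classes, let $n = \exp(G)$, and let $\varphi: \mathrm{Gal}(\mathbb{Q}_n:\mathbb{Q}) \to S_4$ be the homomorphism corresponding to the Galois action on the four irrational classes (identified with $\{1,2,3,4\}$). Then, unless the image of $\varphi$ is the Klein four-group $\{1,(12)(34),(13)(24),(14)(23)\} \trianglelefteq S_4$, $G$ has exactly $4$ irrational irreducible characters.
   Context: $\exp(G)$ is the smallest positive integer $m$ with $g^m=1$ for all $g\in G$. $\mathbb{Q}_n = \mathbb{Q}(\zeta)$ with $\zeta$ a primitive $n$-th root of unity. Each $\sigma \in \mathrm{Gal}(\mathbb{Q}_n:\mathbb{Q})$ satisfies $\sigma(\zeta)=\zeta^{r_\sigma}$ for a unique $0<r_\sigma<n$ coprime to $n$; $\sigma$ acts on complex irreducible characters by $(\sigma\chi)(g)=\sigma(\chi(g))$ and on conjugacy classes by $\sigma\cdot x^G = (x^{r_\sigma})^G$, so that $(\sigma\chi)(x)=\chi(\sigma\cdot x)$. A conjugacy class is irrational if some irreducible character takes a non-rational value on it (equivalently, it is not fixed by the Galois action); rational classes are fixed, so the Galois group permutes the irrational classes. An irreducible character is irrational if some of its values are not rational. *)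

From HB Require Import structures.
From mathcomp Require Import all_boot all_order all_algebra all_fingroup all_solvable all_field all_character.
Set Implicit Arguments. Unset Strict Implicit. Unset Printing Implicit Defensive.
Import GRing.Theory Num.Theory.
Local Open Scope group_scope.

Definition irrational_class (gT : finGroupType) (G : {group gT}) (C : {set gT}) : bool :=
  (C \in classes G) && [exists i : Iirr G, ('chi_i (repr C) \notin Crat)%R].

Definition irr_classes (gT : finGroupType) (G : {group gT}) : {set {set gT}} :=
  [set C in classes G | irrational_class G C].

Definition irrational_char (gT : finGroupType) (G : {group gT}) (i : Iirr G) : bool :=
  [exists x in G, ('chi_i x \notin Crat)%R].

(* Image of phi : Gal(Q_n/Q) -> S_4, where n = exp(G), the Galois automorphism
   sigma with sigma(zeta) = zeta^r (r coprime to n) acting on classes by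
   x^G |-> (x^r)^G, and the irrational classes identified with 'I_4 via e. *)
Definition phi_image (gT : finGroupType) (G : {group gT}) (e : 'I_4 -> {set gT})
  : {set 'S_4} :=
  [set s : 'S_4 | [exists r : 'I_(exponent G),
      coprime r (exponent G) &&
      [forall i : 'I_4, e (s i) == (repr (e i) ^+ r) ^: G]]].

Arguments irrational_char {gT} G i.

Definition o4 (k : nat) : 'I_4 := inord k.

Definition Klein4 : {set 'S_4} :=
  [set 1; tperm (o4 0) (o4 1) * tperm (o4 2) (o4 3);
          tperm (o4 0) (o4 2) * tperm (o4 1) (o4 3);
          tperm (o4 0) (o4 3) * tperm (o4 1) (o4 2)].

From mathcomp Require Import all_boot all_order all_algebra all_fingroup all_solvable all_field all_character.
From mathcomp Require Import zify.
Set Implicit Arguments. Unset Strict Implicit. Unset Printing Implicit Defensive.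
Import GRing.Theory Num.Theory.

(* For k coprime to n = exp(G), the automorphism sigma_k of Q_n acts on Irr(G)
   and, by x^G |-> (x^k)^G, on the classes of G; by Brauer's permutation lemma
   both actions fix the same number of points.  Rational characters and classes
   are fixed by every sigma_k, and the action on characters only depends on the
   action on classes, i.e. on phi(sigma_k).  Hence, with d the number of rational
   classes minus the number of rational characters, sigma_k fixes exactly
   nfix(phi(sigma_k)) + d irrational characters, and there are 4 + d of them.
   An irrational character is moved by some sigma_k, so it is not fixed by
   elements generating the image H of phi.  Now H is an abelian subgroup of S_4
   without fixed points, so unless H is the Klein group either H = <c> with c
   fixed-point-free, whence d = 0, or H = {1, a, b, ab} with a, b transpositions;
   then a, b, ab fix disjoint sets of irrational characters, so
   (2 + d) + (2 + d) + d <= 4 + d, while d >= 0 as ab is fixed-point-free. *)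

Section PermutationFixedPoints.

Local Open Scope group_scope.
Local Open Scope ring_scope.

Definition nfix (T : finType) (s : {perm T}) : nat := #|[set x | s x == x]|.

Lemma mxtrace_perm_mx (R : pzRingType) m (s : 'S_m) :
  \tr (perm_mx s : 'M[R]_m) = (nfix s)%:R.
Proof.
rewrite /nfix -sum1_card natr_sum big_mkcond /=; apply: eq_bigr => i _.
by rewrite !mxE inE; case: (s i == i).
Qed.

Lemma nfixV (T : finType) (s : {perm T}) : nfix s^-1 = nfix s.
Proof. by apply: eq_card => x; rewrite !inE (canF_eq (permKV s)) eq_sym. Qed.

(* The permutation matrices of p and q^-1 are conjugate, hence have equal traces. *)
Lemma eq_nfix_row_col_perm (F : numFieldType) m (A : 'M[F]_m) (p q : 'S_m) :
  A \in unitmx -> row_perm p A = col_perm q A -> nfix p = nfix q.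
Proof.
move=> uA; rewrite row_permE col_permE => /(canRL (mulmxK uA)) Dp.
apply/eqP; rewrite -(nfixV q) -(eqr_nat F) -!mxtrace_perm_mx Dp.
by rewrite mxtrace_mulC mulKmx.
Qed.

Lemma nfix1 (T : finType) : nfix (1 : {perm T}) = #|T|.
Proof. by apply: eq_card => x; rewrite inE perm1 eqxx. Qed.

End PermutationFixedPoints.

Lemma leq_card_sep3 (T : finType) (D : {set T}) (P Q R : pred T) :
    {in D, forall x, P x + Q x + R x <= 1} ->
  #|[set x in D | P x]| + #|[set x in D | Q x]| + #|[set x in D | R x]| <= #|D|.
Proof.
move=> le1_PQR.
have cardE (S : pred T) : #|[set x in D | S x]| = \sum_(x in D) S x.
  rewrite -sum1_card big_mkcond [RHS]big_mkcond; apply: eq_bigr => x _.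
  by rewrite inE; case: (x \in D) (S x).
by rewrite !cardE -!big_split -sum1_card; apply: leq_sum.
Qed.

Section GaloisPowerAction.

Local Open Scope group_scope.
Local Open Scope ring_scope.

Variables (gT : finGroupType) (G : {group gT}).
Local Notation n := (exponent G).

Lemma aut_char_expg (u : {rmorphism algC -> algC}) k (chi : 'CF(G)) x :
    (forall z, z ^+ n = 1 -> u z = z ^+ k) ->
  chi \is a character -> x \in G -> u (chi x) = chi (x ^+ k)%g.
Proof.
move=> Du Nchi Gx; have sxG : <[x]> \subset G by rewrite cycle_subG.
rewrite -(cfResE chi sxG (cycle_id x)) -(cfResE chi sxG (mem_cycle x k)).
have [r ->] := char_sum_irr (cfRes_char <[x]> Nchi).
rewrite !sum_cfunE rmorph_sum; apply: eq_bigr => i _.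
have Li : 'chi_i \is a linear_char by rewrite irr_cyclic_lin ?cycle_cyclic.
rewrite lin_charX ?cycle_id // Du // -lin_charX ?cycle_id //.
by rewrite expg_exponent // lin_char1.
Qed.

Lemma aut_Qn_expg (u : {rmorphism algC -> algC}) :
  exists2 k, coprime k n & forall z, z ^+ n = 1 -> u z = z ^+ k.
Proof.
have [z prim_z] := C_prim_root_exists (exponent_gt0 G).
have prim_uz : n.-primitive_root (u z) by rewrite fmorph_primitive_root.
have [k Dk] := prim_rootP prim_z (prim_expr_order prim_uz).
exists k; first by rewrite -(prim_root_exp_coprime _ prim_z) -Dk.
by move=> w /(prim_rootP prim_z) [j ->]; rewrite rmorphXn /= Dk -!exprM mulnC.
Qed.

(* The values of characters of G lie in a Galois extension of Q, whose
   automorphisms extend to algC. *)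
Lemma aut_char_irrational (chi : 'CF(G)) x :
    chi \is a character -> x \in G -> chi x \notin Crat ->
  exists u : {rmorphism algC -> algC}, u (chi x) != chi x.
Proof.
move=> Nchi Gx chix_irr.
have [Qn galQn [QnC gQnC [_ _ QnG]]] := group_num_field_exists G.
have [a Da] := QnG _ G _ Nchi x (order_dvdG Gx).
have : a \notin fixedField 'Gal({:Qn} / 1).
  rewrite (galois_fixedField galQn); apply: contra chix_irr.
  by rewrite -Da => /vlineP [q ->]; rewrite rmorphZ_num rmorph1 mulr1 Crat_rat.
move=> a_irr; have [sigma _ sigma_a] : exists2 sigma, sigma \in 'Gal({:Qn} / 1) & sigma a != a.
  apply/exists_inP; apply: contraR a_irr => /exists_inPn a_fixed.
  by apply/fixedFieldP => [|sigma /a_fixed /negPn /eqP //]; apply: memvf.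
have [u Du] := gQnC sigma; exists u; rewrite -Da -Du.
by apply: contra sigma_a => /eqP /fmorph_inj ->.
Qed.

Lemma char_irrational_expg (chi : 'CF(G)) x :
    chi \is a character -> x \in G -> chi x \notin Crat ->
  exists2 k, coprime k n & chi (x ^+ k)%g != chi x.
Proof.
move=> Nchi Gx /(aut_char_irrational Nchi Gx) [u u_chix].
have [k co_k_n Du] := aut_Qn_expg u.
by exists k; rewrite // -(aut_char_expg Du Nchi Gx).
Qed.

Lemma char_rational_expg (chi : 'CF(G)) x k :
    coprime k n -> chi \is a character -> x \in G -> chi x \in Crat ->
  chi (x ^+ k)%g = chi x.
Proof.
move=> co_k_n Nchi Gx chix_rat; have [u Du] := Qn_aut_exists co_k_n.
by rewrite -(aut_char_expg Du Nchi Gx) aut_Crat.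
Qed.

Definition classX (C : {set gT}) k := (repr C ^+ k) ^: G.

Lemma classX_class k x : x \in G -> classX (x ^: G) k = (x ^+ k) ^: G.
Proof.
by move=> Gx; rewrite /classX; have [y Gy ->] := repr_class G x; rewrite -conjXg classGidl.
Qed.

Lemma classX_classes C k : C \in classes G -> classX C k \in classes G.
Proof. by case/repr_classesP => GC _; rewrite mem_classes ?groupX. Qed.

Lemma cfun_classX (phi : 'CF(G)) C k : phi (repr (classX C k)) = phi (repr C ^+ k)%g.
Proof. exact: cfun_repr. Qed.

Lemma classX1 C : C \in classes G -> classX C 1 = C.
Proof. by case/repr_classesP => _ {2}->; rewrite /classX expg1. Qed.

Lemma classXM C k k' : C \in classes G -> classX C (k * k') = classX (classX C k) k'.
Proof.
case/repr_classesP => GC _; rewrite [classX C k]/classX classX_class ?groupX //.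
by rewrite -expgM.
Qed.

Lemma classX_mod C k : C \in classes G -> classX C (k %% n) = classX C k.
Proof. by case/repr_classesP => GC _; rewrite /classX expg_mod // expg_exponent. Qed.

Lemma classes_eq_irr C D : C \in classes G -> D \in classes G ->
  (forall i, 'chi[G]_i (repr C) = 'chi_i (repr D)) -> C = D.
Proof.
case/repr_classesP => _ {2}-> /repr_classesP [GD {2}->] chiCD.
exact/class_eqP/eq_irr_mem_classP.
Qed.

Lemma aut_irr_classX (u : {rmorphism algC -> algC}) k C i :
    (forall z, z ^+ n = 1 -> u z = z ^+ k) -> C \in classes G ->
  'chi[G]_i (repr (classX C k)) = u ('chi_i (repr C)).
Proof.
move=> Du /repr_classesP [GC _].
by rewrite cfun_classX (aut_char_expg Du) ?irr_char.
Qed.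

Lemma classX_inj k : coprime k n -> {in classes G &, injective (classX^~ k)}.
Proof.
move=> co_k_n C D GC GD eqCD; have [u Du] := Qn_aut_exists co_k_n.
apply: classes_eq_irr => // i; apply: (fmorph_inj u).
by rewrite -!(aut_irr_classX _ Du) // eqCD.
Qed.

Lemma irrational_classX C k : coprime k n -> C \in classes G ->
  irrational_class G (classX C k) = irrational_class G C.
Proof.
move=> co_k_n GC; have [u Du] := Qn_aut_exists co_k_n.
rewrite /irrational_class classX_classes // GC; apply: eq_existsb => i.
by rewrite (aut_irr_classX _ Du) // Crat_aut.
Qed.

Lemma rational_classX C k : coprime k n -> C \in classes G ->
  ~~ irrational_class G C -> classX C k = C.
Proof.
move=> co_k_n GC; rewrite /irrational_class GC negb_exists => /forallP chiC_rat.
apply: classes_eq_irr; rewrite ?classX_classes // => i.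
case/repr_classesP: GC => GC _.
by rewrite cfun_classX char_rational_expg ?irr_char // -[_ \in _]negbK chiC_rat.
Qed.

Lemma irrational_class_moved C :
  irrational_class G C -> exists2 k, coprime k n & classX C k != C.
Proof.
move=> /andP [/repr_classesP [GC _] /existsP [i]].
move=> /(char_irrational_expg (irr_char i) GC) [k co_k_n chi_moved].
by exists k => //; apply: contra chi_moved => /eqP fixC; rewrite -cfun_classX fixC.
Qed.

(* By aut_char_expg, cf_expg_fixed chi k says that the character chi is fixed
   by the automorphism sigma_k of Q_n. *)
Definition cf_expg_fixed (phi : 'CF(G)) k := [forall x in G, phi (x ^+ k)%g == phi x].

Lemma cf_expg_fixedP (phi : 'CF(G)) k :
  reflect (forall x, x \in G -> phi (x ^+ k)%g = phi x) (cf_expg_fixed phi k).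
Proof. by apply: (iffP forall_inP) => fixed_phi x /fixed_phi /eqP. Qed.

Lemma cf_expg_fixed1 (phi : 'CF(G)) : cf_expg_fixed phi 1.
Proof. by apply/cf_expg_fixedP => x _; rewrite expg1. Qed.

Lemma cf_expg_fixedM (phi : 'CF(G)) k k' :
  cf_expg_fixed phi k -> cf_expg_fixed phi k' -> cf_expg_fixed phi (k * k').
Proof.
move=> /cf_expg_fixedP fix_k /cf_expg_fixedP fix_k'; apply/cf_expg_fixedP => x Gx.
by rewrite expgM fix_k' ?groupX ?fix_k.
Qed.

Lemma cf_expg_fixedX (phi : 'CF(G)) k m : cf_expg_fixed phi k -> cf_expg_fixed phi (k ^ m).
Proof.
by move=> fix_k; elim: m => [|m IHm]; rewrite ?cf_expg_fixed1 // expnS cf_expg_fixedM.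
Qed.

Lemma rational_irr_fixed i k :
  coprime k n -> ~~ irrational_char G i -> cf_expg_fixed 'chi_i k.
Proof.
rewrite negb_exists_in => co_k_n /forall_inP chi_rat; apply/cf_expg_fixedP => x Gx.
by rewrite char_rational_expg ?irr_char // -[_ \in _]negbK chi_rat.
Qed.

Lemma irrational_irr_moved i :
  irrational_char G i -> exists2 k, coprime k n & ~~ cf_expg_fixed 'chi_i k.
Proof.
case/exists_inP => x Gx /(char_irrational_expg (irr_char i) Gx) [k co_k_n chi_moved].
by exists k => //; apply: contra chi_moved => /cf_expg_fixedP ->.
Qed.

(* This is Brauer's permutation lemma for the Galois automorphism of Q_n
   acting as z |-> z ^+ k on the n-th roots of unity. *)
Lemma card_irr_expg_fixed k : coprime k n ->
  #|[set i : Iirr G | cf_expg_fixed 'chi_i k]| = #|[set C in classes G | classX C k == C]|.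
Proof.
move=> co_k_n; have [u Du] := Qn_aut_exists co_k_n.
have inj_q : injective (fun j : Iirr G => class_Iirr G (classX (irr_class j) k)).
  move=> j1 j2 eq_q; apply: (can_inj (@irr_classK _ G)).
  apply: (classX_inj co_k_n); rewrite ?irr_classP //.
  by apply: (can_in_inj (@class_IirrK _ G)); rewrite ?classX_classes ?irr_classP.
pose p := perm (@aut_Iirr_inj _ G u); pose q := perm inj_q.
have fixed_p i : (p i == i) = cf_expg_fixed 'chi_i k.
  rewrite permE -(inj_eq irr_inj) aut_IirrE.
  apply/eqP/cf_expg_fixedP => [fix_chi x Gx | fix_chi].
    by rewrite -(aut_char_expg Du) ?irr_char // -{2}fix_chi cfunE.
  by apply/cfun_inP => x Gx; rewrite cfunE (aut_char_expg Du) ?irr_char ?fix_chi.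
have fixed_q j : (q j == j) = (classX (irr_class j) k == irr_class j).
  by rewrite permE -(can_eq (@irr_classK _ G)) class_IirrK ?classX_classes ?irr_classP.
have pXq : row_perm p (character_table G) = col_perm q (character_table G).
  apply/matrixP => i j; rewrite !mxE !permE aut_IirrE cfunE.
  rewrite class_IirrK ?classX_classes ?irr_classP // (aut_irr_classX _ Du) //.
  exact: irr_classP.
have -> : #|[set i | cf_expg_fixed 'chi_i k]| = nfix p.
  by apply: eq_card => i; rewrite !inE fixed_p.
rewrite (eq_nfix_row_col_perm (character_table_unit G) pXq) /nfix.
rewrite -(card_imset _ (can_inj (@irr_classK _ G))); apply: eq_card => C.
rewrite inE; apply/imsetP/andP => [[j] | [GC fixC]].
  by rewrite inE fixed_q => fixj ->; rewrite irr_classP.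
by exists (class_Iirr G C); rewrite ?inE ?fixed_q class_IirrK.
Qed.

End GaloisPowerAction.

(* Permutations do not reduce by computation, so facts about S_4 are checked
   on the images of its elements under the injective morphism perm4_code. *)
Definition perm4_code (s : 'S_4) : seq nat := [seq val (s (inord i)) | i <- iota 0 4].
Definition S4_codes : seq (seq nat) := permutations (iota 0 4).
Definition code_mul (a b : seq nat) : seq nat := [seq nth 0 b x | x <- a].
Definition code_exp (a : seq nat) m : seq nat := iter m (code_mul a) (iota 0 4).
Definition code_nfix (a : seq nat) : nat := count (fun x => nth 0 a x == x) (iota 0 4).
Definition code_commute (a b : seq nat) : bool := code_mul a b == code_mul b a.
Definition code_in_cycle (a c : seq nat) : bool := has (fun i => c == code_exp a i) (iota 0 24).
Definition code_in_mul (a b c : seq nat) : bool :=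
  has (fun i => has (fun j => c == code_mul (code_exp a i) (code_exp b j)) (iota 0 4)) (iota 0 4).
Definition Klein4_codes : seq (seq nat) :=
  [:: iota 0 4; [:: 1; 0; 3; 2]; [:: 2; 3; 0; 1]; [:: 3; 2; 1; 0]].

Section SymmetricGroup4.

Local Open Scope group_scope.

Lemma nth_perm4_code s (i : 'I_4) : nth 0 (perm4_code s) i = s i.
Proof. by rewrite (nth_map 0) ?size_iota // nth_iota // inord_val. Qed.

Lemma perm4_code_inj : injective perm4_code.
Proof.
by move=> s t eq_st; apply/permP => i; apply/val_inj; rewrite /= -!nth_perm4_code eq_st.
Qed.

Lemma perm4_codeM s t : perm4_code (s * t) = code_mul (perm4_code s) (perm4_code t).
Proof. by rewrite /code_mul -map_comp; apply: eq_map => i; rewrite /= permM nth_perm4_code. Qed.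

Lemma perm4_code1 : perm4_code 1 = iota 0 4.
Proof.
rewrite -[RHS]map_id; apply/eq_in_map => i; rewrite mem_iota perm1 => /andP [_ lt_i4].
by rewrite /= inordK.
Qed.

Lemma perm4_codeX s m : perm4_code (s ^+ m) = code_exp (perm4_code s) m.
Proof. by elim: m => [|m IHm]; rewrite ?perm4_code1 // expgS perm4_codeM IHm. Qed.

Lemma code_nfixE s : code_nfix (perm4_code s) = nfix s.
Proof.
rewrite /nfix cardE size_filter /code_nfix -val_enum_ord count_map -enumT.
by apply: eq_count => i; rewrite /= nth_perm4_code inE val_eqE.
Qed.

Lemma perm4_code_mem s : perm4_code s \in S4_codes.
Proof.
rewrite mem_permutations uniq_perm ?iota_uniq // => [|x].
  rewrite map_inj_in_uniq ?iota_uniq // => i j; rewrite !mem_iota => lt_i4 lt_j4.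
  by move/val_inj/perm_inj/(congr1 val); rewrite /= !inordK.
rewrite mem_iota; apply/mapP/idP => [[i _ ->] | lt_x4]; first exact: ltn_ord.
exists (val (s^-1 (inord x))); first by rewrite mem_iota /=.
by rewrite inord_val permKV /= inordK.
Qed.

Lemma code_in_cycleE a c : code_in_cycle (perm4_code a) (perm4_code c) = (c \in <[a]>).
Proof.
apply/hasP/cycleP => [[i _ /eqP] | [i ->]].
  by rewrite -perm4_codeX => /perm4_code_inj ->; exists i.
have a24 : a ^+ 24 = 1.
  by apply/eqP; rewrite -order_dvdn (dvdn_trans (order_dvdG (in_setT a))) // cardsT card_Sn.
by exists (i %% 24); rewrite ?mem_iota ?ltn_mod // -perm4_codeX expg_mod.
Qed.

Lemma mem_mulg_code a b c :
  code_in_mul (perm4_code a) (perm4_code b) (perm4_code c) -> c \in <[a]> * <[b]>.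
Proof.
case/hasP => i _ /hasP [j _ /eqP]; rewrite -!perm4_codeX -perm4_codeM.
by move/perm4_code_inj ->; rewrite mem_mulg ?mem_cycle.
Qed.

Lemma commute_code a b : commute a b -> code_commute (perm4_code a) (perm4_code b).
Proof. by rewrite /code_commute -!perm4_codeM => ->. Qed.

Lemma Klein4_code s : (s \in Klein4) = (perm4_code s \in Klein4_codes).
Proof.
rewrite /Klein4 !inE -!(inj_eq perm4_code_inj) !perm4_codeM perm4_code1.
by rewrite /perm4_code /o4 /= !permE /= -!val_eqE /= !inordK // -!orbA.
Qed.

Lemma all_S4_codes (P : pred (seq nat)) s : all P S4_codes -> P (perm4_code s).
Proof. by move/allP; apply; apply: perm4_code_mem. Qed.

Lemma S4_codes_commute_fpf :
  all (fun a => all (fun b => code_commute a b ==>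
    all (fun i => all (fun j => [&& nth 0 a i != i, nth 0 a j == j & nth 0 b j != j] ==>
      (code_nfix b == 0) || (code_nfix (code_mul a b) == 0)) (iota 0 4)) (iota 0 4))
    S4_codes) S4_codes.
Proof. by vm_compute. Qed.

Lemma S4_codes_fpf_centralizer :
  all (fun c => all (fun h =>
    [&& code_nfix c == 0, code_commute c h & ~~ code_in_cycle c h] ==>
    all (fun g => code_commute g c && code_commute g h ==>
      if code_in_cycle h c then (code_nfix h == 0) && code_in_cycle h g
      else if code_nfix h == 0 then (g \in Klein4_codes) && all (code_in_mul c h) Klein4_codes
      else [&& code_nfix h == 2, code_nfix (code_mul h c) == 2, code_in_mul h c g,
               code_in_mul h (code_mul h c) g & code_in_mul (code_mul h c) c g])
    S4_codes) S4_codes) S4_codes.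
Proof. by vm_compute. Qed.

Lemma S4_commute_fpf (a b : 'S_4) i j :
  commute a b -> a i != i -> a j = j -> b j != j -> nfix b = 0 \/ nfix (a * b) = 0.
Proof.
move=> cab ai aj bj; have := all_S4_codes b (all_S4_codes a S4_codes_commute_fpf).
rewrite commute_code // => /allP /(_ i); rewrite mem_iota leq0n ltn_ord => /(_ isT).
move=> /allP /(_ j); rewrite mem_iota leq0n ltn_ord => /(_ isT).
rewrite !nth_perm4_code !val_eqE ai aj bj eqxx -perm4_codeM !code_nfixE.
by case/orP => /eqP; [left | right].
Qed.

Lemma S4_fpf_centralizer (c h g : 'S_4) :
    nfix c = 0 -> commute c h -> h \notin <[c]> -> commute g c -> commute g h ->
  if c \in <[h]> then (nfix h == 0) && (g \in <[h]>)
  else if nfix h == 0 then (g \in Klein4) && (Klein4 \subset <[c]> * <[h]>)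
  else [&& nfix h == 2, nfix (h * c) == 2, g \in <[h]> * <[c]>,
           g \in <[h]> * <[h * c]> & g \in <[h * c]> * <[c]>].
Proof.
move=> fix_c chc notch cgc cgh.
have := all_S4_codes h (all_S4_codes c S4_codes_fpf_centralizer).
rewrite code_nfixE fix_c commute_code // code_in_cycleE notch => /(all_S4_codes g).
rewrite !commute_code // !code_in_cycleE !code_nfixE -perm4_codeM code_nfixE.
case: ifP => // _; case: ifP => _.
  case/andP => K4g /allP sK4ch; rewrite Klein4_code K4g; apply/subsetP => s.
  by rewrite Klein4_code => /sK4ch /mem_mulg_code.
by case/and5P => -> -> /mem_mulg_code -> /mem_mulg_code -> /mem_mulg_code ->.
Qed.

Lemma abelian_S4_fpf (H : {group 'S_4}) :
  abelian H -> (forall i, exists2 s, s \in H & s i != i) -> exists2 c, c \in H & nfix c = 0.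
Proof.
move=> cHH moved; have [a Ha a0] := moved ord0.
have [|] := eqVneq (nfix a) 0; first by exists a.
rewrite /nfix cards_eq0 => /set0Pn [j]; rewrite inE => /eqP aj.
have [b Hb bj] := moved j.
have [] := S4_commute_fpf (centsP cHH a Ha b Hb) a0 aj bj; first by exists b.
by exists (a * b); rewrite ?groupM.
Qed.

Lemma abelian_S4_structure (H : {group 'S_4}) :
    abelian H -> (forall i, exists2 s, s \in H & s i != i) -> H != Klein4 :> {set _} ->
  (exists2 c, c \in H & nfix c = 0 /\ H \subset <[c]>) \/
  (exists a b c, [/\ [/\ a \in H, b \in H & c \in H], (nfix a + nfix b + nfix c = 4)%N,
     nfix c = 0 & [/\ H \subset <[a]> * <[b]>, H \subset <[a]> * <[c]> & H \subset <[b]> * <[c]>]]).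
Proof.
move=> cHH moved notK4; have [c Hc fix_c] := abelian_S4_fpf cHH moved.
have [sHc | /subsetPn [h Hh notch]] := boolP (H \subset <[c]>); first by left; exists c.
have cent g : g \in H -> _ := fun Hg => S4_fpf_centralizer fix_c
  (centsP cHH c Hc h Hh) notch (centsP cHH g Hg c Hc) (centsP cHH g Hg h Hh).
have [chc | notchc] := boolP (c \in <[h]>).
  left; exists h => //; move: (cent c Hc); rewrite chc => /andP [/eqP fix_h _]; split=> //.
  by apply/subsetP => g /cent; rewrite chc => /andP [].
have [fix_h | nfix_h] := eqVneq (nfix h) 0.
  case/negP: notK4; rewrite eqEsubset; apply/andP; split.
    by apply/subsetP => g /cent; rewrite (negPf notchc) fix_h => /andP [].
  move: (cent c Hc); rewrite (negPf notchc) fix_h => /andP [_ /subset_trans -> //].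
  by rewrite mul_subG ?cycle_subG.
move: (cent c Hc); rewrite (negPf notchc) (negPf nfix_h) => /and5P [/eqP fix2_h /eqP fix2_hc _ _ _].
right; exists h, (h * c), c; split; rewrite ?groupM ?fix2_h ?fix2_hc ?fix_c //.
by split; apply/subsetP => g /cent; rewrite (negPf notchc) (negPf nfix_h) => /and5P [].
Qed.

End SymmetricGroup4.

Section IrrationalClasses.

Local Open Scope ring_scope.
Local Open Scope group_scope.

Variables (gT : finGroupType) (G : {group gT}) (e : 'I_4 -> {set gT}).
Hypotheses (card_irr_classes : #|irr_classes G| = 4%N) (inj_e : injective e)
  (irr_e : forall i, e i \in irr_classes G).
Local Notation n := (exponent G).
Local Notation classX := (classX G).

Lemma e_classes i : e i \in classes G.
Proof. by have := irr_e i; rewrite inE => /andP []. Qed.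

Lemma e_irrational i : irrational_class G (e i).
Proof. by have := irr_e i; rewrite inE => /andP []. Qed.

Lemma irr_classes_e C : C \in irr_classes G -> exists i, e i = C.
Proof.
have eq_e : e @: setT =i irr_classes G.
  apply/subset_cardP; first by rewrite card_imset // cardsT card_ord.
  by apply/subsetP => _ /imsetP [i _ ->].
by rewrite -eq_e => /imsetP [i _ ->]; exists i.
Qed.

Lemma classX_irr_classes C k :
  coprime k n -> C \in irr_classes G -> classX C k \in irr_classes G.
Proof.
by move=> co_k_n; rewrite !inE => /andP [GC irrC]; rewrite classX_classes ?irrational_classX.
Qed.

(* phi(sigma_k); the identity when k is not coprime to n. *)
Definition galois_perm k : 'S_4 :=
  odflt 1 [pick s : 'S_4 | [forall i, e (s i) == classX (e i) k]].

Lemma galois_permE k i : coprime k n -> e (galois_perm k i) = classX (e i) k.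
Proof.
move=> co_k_n.
have /fin_all_exists [f Df] j : exists j', e j' = classX (e j) k.
  exact/irr_classes_e/classX_irr_classes.
have inj_f : injective f.
  move=> j1 j2 eq_f; apply: inj_e; apply: (classX_inj co_k_n); rewrite ?e_classes //.
  by rewrite -!Df eq_f.
rewrite /galois_perm; case: pickP => [s /forallP /(_ i) /eqP // | /(_ (perm inj_f))].
by move/forallP => []; move=> j; rewrite permE Df.
Qed.

Lemma galois_permM k k' : coprime k n -> coprime k' n ->
  galois_perm (k * k')%N = galois_perm k * galois_perm k'.
Proof.
move=> co_k co_k'; apply/permP => i; apply: inj_e.
by rewrite permM !galois_permE ?coprimeMl ?co_k ?co_k' // classXM ?e_classes.
Qed.

Lemma galois_perm1 : galois_perm 1 = 1.
Proof.
by apply/permP => i; apply: inj_e; rewrite galois_permE ?coprime1n // classX1 ?e_classes ?perm1.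
Qed.

Lemma galois_permX k m : coprime k n -> galois_perm (k ^ m)%N = galois_perm k ^+ m.
Proof.
move=> co_k; elim: m => [|m IHm]; first by rewrite galois_perm1.
by rewrite expnS galois_permM ?coprimeXl // IHm expgS.
Qed.

Lemma phi_imageP s :
  reflect (exists2 k, coprime k n & s = galois_perm k) (s \in phi_image G e).
Proof.
rewrite inE; apply: (iffP existsP) => [[r /andP [co_r /forallP Ds]] | [k co_k ->]].
  exists r => //; apply/permP => i; apply: inj_e.
  by rewrite galois_permE //; apply/eqP/Ds.
have lt_kn : (k %% n < n)%N by rewrite ltn_mod exponent_gt0.
exists (Ordinal lt_kn); rewrite /= coprime_modl co_k; apply/forallP => i.
by rewrite galois_permE // -classX_mod ?e_classes.
Qed.

Lemma galois_perm_phi_image k : coprime k n -> galois_perm k \in phi_image G e.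
Proof. by move=> co_k; apply/phi_imageP; exists k. Qed.

Lemma phi_image_group_set : group_set (phi_image G e).
Proof.
apply/group_setP; split; first by rewrite -galois_perm1 galois_perm_phi_image ?coprime1n.
move=> _ _ /phi_imageP [k co_k ->] /phi_imageP [k' co_k' ->].
by rewrite -galois_permM // galois_perm_phi_image // coprimeMl co_k.
Qed.

Lemma phi_image_abelian : abelian (phi_image G e).
Proof.
apply/centsP => _ /phi_imageP [k co_k ->] _ /phi_imageP [k' co_k' ->].
by rewrite /commute -!galois_permM // mulnC.
Qed.

Lemma phi_image_moved i : exists2 s, s \in phi_image G e & s i != i.
Proof.
have [k co_k moved] := irrational_class_moved (e_irrational i).
exists (galois_perm k); first exact: galois_perm_phi_image.
by apply: contra moved => /eqP fix_i; rewrite -galois_permE // fix_i.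
Qed.

Lemma galois_perm_cfunE k k' (phi : 'CF(G)) x :
    coprime k n -> coprime k' n -> galois_perm k = galois_perm k' -> x \in G ->
  phi (x ^+ k) = phi (x ^+ k').
Proof.
move=> co_k co_k' eq_kk' Gx.
suff eqX : classX (x ^: G) k = classX (x ^: G) k'.
  by rewrite -(cfun_repr phi (x ^+ k)) -classX_class // eqX classX_class // cfun_repr.
have xGG : x ^: G \in classes G by apply: mem_classes.
have [irr_x | rat_x] := boolP (irrational_class G (x ^: G)); last by rewrite !rational_classX.
have [i <-] : exists i, e i = x ^: G by apply: irr_classes_e; rewrite inE xGG.
by rewrite -!galois_permE // eq_kk'.
Qed.

Lemma fixed_by_generators_rational k1 k2 i : coprime k1 n -> coprime k2 n ->
    cf_expg_fixed 'chi_i k1 -> cf_expg_fixed 'chi_i k2 ->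
    phi_image G e \subset <[galois_perm k1]> * <[galois_perm k2]> ->
  ~~ irrational_char G i.
Proof.
move=> co_k1 co_k2 fix_k1 fix_k2 sHk12; apply/negP => /irrational_irr_moved [r co_r].
case/negP; have := subsetP sHk12 _ (galois_perm_phi_image co_r).
case/mulsgP => _ _ /cycleP [u ->] /cycleP [v ->].
rewrite -!galois_permX // -galois_permM ?coprimeXl // => Dr.
have /cf_expg_fixedP fix_uv := cf_expg_fixedM (cf_expg_fixedX u fix_k1) (cf_expg_fixedX v fix_k2).
apply/cf_expg_fixedP => x Gx.
by rewrite (galois_perm_cfunE _ _ _ Dr) ?coprimeMl ?coprimeXl ?fix_uv.
Qed.

Local Notation irrX := [set i : Iirr G | irrational_char G i].
Local Notation ratC := [set C in classes G | ~~ irrational_class G C].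

Lemma card_fixed_irr_classes k : coprime k n ->
  #|[set C in irr_classes G | classX C k == C]| = nfix (galois_perm k).
Proof.
move=> co_k; rewrite /nfix -(card_imset _ inj_e); apply: eq_card => C.
rewrite in_set; apply/andP/imsetP => [[irrC /eqP fixC] | [i]].
  have [i Di] := irr_classes_e irrC.
  by exists i; rewrite // inE -(inj_eq inj_e) galois_permE // Di fixC.
by rewrite inE => /eqP fix_i ->; rewrite irr_e -galois_permE // fix_i.
Qed.

Lemma card_fixed_irrational k : coprime k n ->
  (#|[set i in irrX | cf_expg_fixed 'chi_i k]| + #|~: irrX| = nfix (galois_perm k) + #|ratC|)%N.
Proof.
move=> co_k; have := card_irr_expg_fixed co_k.
rewrite -(cardsID irrX) -(cardsID (irr_classes G)) -card_fixed_irr_classes //.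
have -> : [set i | cf_expg_fixed 'chi_i k] :&: irrX = [set i in irrX | cf_expg_fixed 'chi_i k].
  by apply/setP => i; rewrite !inE andbC.
have -> : [set i | cf_expg_fixed 'chi_i k] :\: irrX = ~: irrX.
  apply/setP => i; rewrite !inE.
  by case: (boolP (irrational_char G i)) => //= rat_i; rewrite rational_irr_fixed.
have -> : [set C in classes G | classX C k == C] :&: irr_classes G =
          [set C in irr_classes G | classX C k == C].
  apply/setP => C; rewrite /irr_classes !inE.
  by case: (C \in classes G) => //=; rewrite andbC.
have -> // : [set C in classes G | classX C k == C] :\: irr_classes G = ratC.
apply/setP => C; rewrite /irr_classes !inE; case GC: (C \in classes G); rewrite ?andbF //=.
by case: (boolP (irrational_class G C)) => //= rat_C; rewrite rational_classX ?eqxx.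
Qed.

Lemma card_irrational_chars_classes : (#|irrX| + #|~: irrX| = 4 + #|ratC|)%N.
Proof.
rewrite -[4%N](card_ord 4) -nfix1 -galois_perm1 -card_fixed_irrational ?coprime1n //.
by congr (_ + _)%N; apply: eq_card => i; rewrite !inE cf_expg_fixed1 andbT.
Qed.

Lemma card_rational_cyclic k : coprime k n -> nfix (galois_perm k) = 0 ->
  phi_image G e \subset <[galois_perm k]> -> #|~: irrX| = #|ratC|.
Proof.
move=> co_k fix0 sHk; have := card_fixed_irrational co_k; rewrite fix0.
suff -> : [set i in irrX | cf_expg_fixed 'chi_i k] = set0 by rewrite cards0.
apply/setP => i; rewrite !inE; apply/negP => /andP [irr_i fix_i]; move: irr_i.
apply/negP; apply: (fixed_by_generators_rational co_k co_k fix_i fix_i).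
exact: subset_trans sHk (mulG_subl _ _).
Qed.

Lemma card_rational_pairwise ka kb kc :
    coprime ka n -> coprime kb n -> coprime kc n ->
    (nfix (galois_perm ka) + nfix (galois_perm kb) + nfix (galois_perm kc) = 4)%N ->
    nfix (galois_perm kc) = 0 ->
    phi_image G e \subset <[galois_perm ka]> * <[galois_perm kb]> ->
    phi_image G e \subset <[galois_perm ka]> * <[galois_perm kc]> ->
    phi_image G e \subset <[galois_perm kb]> * <[galois_perm kc]> ->
  #|~: irrX| = #|ratC|.
Proof.
move=> co_a co_b co_c fix_abc fix_c sHab sHac sHbc.
have /leq_card_sep3 : {in irrX, forall i, (cf_expg_fixed 'chi_i ka + cf_expg_fixed 'chi_i kb
    + cf_expg_fixed 'chi_i kc <= 1)%N}.
  move=> i; rewrite inE => irr_i.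
  have excl k1 k2 : coprime k1 n -> coprime k2 n ->
      phi_image G e \subset <[galois_perm k1]> * <[galois_perm k2]> ->
    ~~ (cf_expg_fixed 'chi_i k1 && cf_expg_fixed 'chi_i k2).
    move=> co_k1 co_k2 sH12; apply/negP => /andP [fix1 fix2].
    by move: irr_i; apply/negP; apply: fixed_by_generators_rational fix1 fix2 sH12.
  move: (excl _ _ co_a co_b sHab) (excl _ _ co_a co_c sHac) (excl _ _ co_b co_c sHbc).
  by move: (cf_expg_fixed _ ka) (cf_expg_fixed _ kb) (cf_expg_fixed _ kc) => [] [] [].
have := card_fixed_irrational co_a; have := card_fixed_irrational co_b.
have := card_fixed_irrational co_c; have := card_irrational_chars_classes.
lia.
Qed.

Theorem card_irrational_chars : phi_image G e != Klein4 -> #|irrX| = 4%N.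
Proof.
move=> notK4; suff eq_rat : #|~: irrX| = #|ratC|.
  by have := card_irrational_chars_classes; rewrite eq_rat; lia.
have := @abelian_S4_structure (Group phi_image_group_set) phi_image_abelian phi_image_moved notK4.
case=> [[c /phi_imageP [k co_k ->] [fix_c sHc]] | [a [b [c []]]]].
  exact: card_rational_cyclic co_k fix_c sHc.
case=> /phi_imageP [ka co_a ->] /phi_imageP [kb co_b ->] /phi_imageP [kc co_c ->].
move=> fix_abc fix_c [sHab sHac sHbc].
exact: card_rational_pairwise fix_abc fix_c sHab sHac sHbc.
Qed.

End IrrationalClasses.

Theorem mainTheorem9 (gT : finGroupType) (G : {group gT}) (e : 'I_4 -> {set gT}) :
  #|irr_classes G| = 4 ->
  injective e ->
  (forall i, e i \in irr_classes G) ->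
  phi_image G e != Klein4 ->
  #|[set i : Iirr G | irrational_char G i]| = 4.
Proof. exact: card_irrational_chars. Qed.
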